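(* Let $\mathcal{A}$ and $\mathcal{U}$ be Banach algebras and $\theta$ a nonzero character on $\mathcal{A}$. A linear mapping $T:\mathcal{A}\times_{\theta}\mathcal{U}\to\mathcal{A}\times_{\theta}\mathcal{U}$ is a multiplier if and only if there are linear mappings $R_1:\mathcal{A}\to\mathcal{A}$, $R_2:\mathcal{A}\to\mathcal{U}$, $S_1:\mathcal{U}\to\mathcal{A}$, $S_2:\mathcal{U}\to\mathcal{U}$ with $T((a,u))=(R_1(a)+S_1(u),\ R_2(a)+S_2(u))$ for all $a\in\mathcal{A},u\in\mathcal{U}$, satisfying, for all $a,a'\in\mathcal{A}$ and $u,u'\in\mathcal{U}$: (i) $R_1$ is a multiplier on $\mathcal{A}$; (ii) $aS_1(u)=S_1(u)a=0$; (iii) $\theta(a)R_2(a')=\theta(a')R_2(a)$; (iv) $\theta(a)S_2(u)=\theta(R_1(a))u+R_2(a)u=\theta(R_1(a))u+uR_2(a)$; (v) $\theta(S_1(u))u'+S_2(u)u'=\theta(S_1(u'))u+uS_2(u')$.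
   Context: The Lau product $\mathcal{A}\times_{\theta}\mathcal{U}$ is $\mathcal{A}\times\mathcal{U}$ with norm $\|(a,u)\|=\|a\|+\|u\|$ and product $(a,u)(a',u')=(aa',\theta(a)u'+\theta(a')u+uu')$. A multiplier on a Banach algebra $\mathcal{B}$ is a linear map $T:\mathcal{B}\to\mathcal{B}$ with $xT(y)=T(x)y$ for all $x,y\in\mathcal{B}$. *)

From HB Require Import structures.
From mathcomp Require Import all_boot all_order all_algebra.
From mathcomp Require Import all_classical all_reals all_analysis.
Set Implicit Arguments. Unset Strict Implicit. Unset Printing Implicit Defensive.
Import Order.TTheory GRing.Theory Num.Theory.
Import numFieldNormedType.Exports.
Local Open Scope ring_scope.

Definition banach_algebra (K : numFieldType) (V : completeNormedModType K)
  (mul : V -> V -> V) : Prop :=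
  [/\ (forall x y z, mul x (mul y z) = mul (mul x y) z),
      (forall k x y z, mul (k *: x + y) z = k *: mul x z + mul y z),
      (forall k x y z, mul z (k *: x + y) = k *: mul z x + mul z y)
    & (forall x y, `|mul x y| <= `|x| * `|y|)].

Definition character (K : numFieldType) (V : lmodType K)
  (mul : V -> V -> V) (theta : V -> K) : Prop :=
  [/\ (forall k x y, theta (k *: x + y) = k * theta x + theta y),
      (forall x y, theta (mul x y) = theta x * theta y)
    & exists x, theta x != 0].

Definition is_linear (K : numFieldType) (V W : lmodType K) (f : V -> W) : Prop :=
  forall k x y, f (k *: x + y) = k *: f x + f y.

Definition multiplier (V : Type) (mul : V -> V -> V) (T : V -> V) : Prop :=
  forall x y, mul x (T y) = mul (T x) y.

Definition lau_mul (K : numFieldType) (A U : lmodType K)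
  (mulA : A -> A -> A) (mulU : U -> U -> U) (theta : A -> K)
  (x y : A * U) : A * U :=
  (mulA x.1 y.1, theta x.1 *: y.2 + theta y.1 *: x.2 + mulU x.2 y.2).

Definition lau_norm (K : numFieldType) (A U : normedModType K) (x : A * U) : K :=
  `|x.1| + `|x.2|.

(* Only biadditivity of the products and additivity of [theta] and of [T]
   matter.  Writing [T (a, u) = (R1 a + S1 u, R2 a + S2 u)], the defect
   [x T(y) - T(x) y] is biadditive in [(x, y)], so [T] is a multiplier iff it
   commutes with the product on the generators [(a, 0)] and [(0, u)].  On
   generators the Lau product has simple closed forms, and the four resulting
   pairs of coordinate equations are exactly conditions (i)-(v). *)
From HB Require Import structures.
From mathcomp Require Import all_boot all_order all_algebra.
From mathcomp Require Import all_classical all_reals all_analysis.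
Set Implicit Arguments. Unset Strict Implicit. Unset Printing Implicit Defensive.
Import Order.TTheory GRing.Theory Num.Theory.
Import numFieldNormedType.Exports.
Local Open Scope ring_scope.

Lemma morph_add0 (V W : zmodType) (f : V -> W) :
  {morph f : x y / x + y} -> f 0 = 0.
Proof.
move=> fD; have := fD 0 0; rewrite addr0 => /(congr1 (fun w => w - f 0)).
by rewrite subrr addrK.
Qed.

Lemma pair_split (V W : zmodType) (v : V) (w : W) : (v, w) = (v, 0) + (0, w).
Proof. by apply/pair_equal_spec; rewrite /= addr0 add0r. Qed.

Section LinearMaps.
Variable K : numFieldType.

Lemma is_linear_add (V W : lmodType K) (f : V -> W) :
  is_linear f -> {morph f : x y / x + y}.
Proof. by move=> fL x y; have := fL 1 x y; rewrite !scale1r. Qed.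

Lemma is_linear_comp (V W X : lmodType K) (f : W -> X) (g : V -> W) :
  is_linear f -> is_linear g -> is_linear (f \o g).
Proof. by move=> fL gL k x y /=; rewrite gL fL. Qed.

Lemma is_linear_pairl (V W : lmodType K) : is_linear (fun v : V => (v, 0 : W)).
Proof. by move=> k x y; congr pair; rewrite /= scaler0 addr0. Qed.

Lemma is_linear_pairr (V W : lmodType K) : is_linear (fun w : W => (0 : V, w)).
Proof. by move=> k x y; congr pair; rewrite /= scaler0 addr0. Qed.

Lemma is_linear_blocks (V W : lmodType K) (T : V * W -> V * W) :
  is_linear T ->
  exists (R1 : V -> V) (R2 : V -> W) (S1 : W -> V) (S2 : W -> W),
    [/\ is_linear R1, is_linear R2, is_linear S1 & is_linear S2] /\
    (forall v w, T (v, w) = (R1 v + S1 w, R2 v + S2 w)).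
Proof.
move=> TL; pose Tv := T \o (fun v : V => (v, 0 : W)).
pose Tw := T \o (fun w : W => (0 : V, w)).
have TvL : is_linear Tv := is_linear_comp TL (@is_linear_pairl V W).
have TwL : is_linear Tw := is_linear_comp TL (@is_linear_pairr V W).
exists (fst \o Tv), (snd \o Tv), (fst \o Tw), (snd \o Tw); split.
  by split; apply: is_linear_comp.
by move=> v w; rewrite [(v, w)]pair_split (is_linear_add TL).
Qed.

End LinearMaps.

Lemma banach_algebra_addl (K : numFieldType) (V : completeNormedModType K)
    (mul : V -> V -> V) :
  banach_algebra mul -> forall z, {morph mul^~ z : x y / x + y}.
Proof. by case=> _ mulZDl _ _ z; apply: is_linear_add => k x y; apply: mulZDl. Qed.

Lemma banach_algebra_addr (K : numFieldType) (V : completeNormedModType K)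
    (mul : V -> V -> V) :
  banach_algebra mul -> forall z, {morph mul z : x y / x + y}.
Proof. by case=> _ _ mulZDr _ z; apply: is_linear_add => k x y; apply: mulZDr. Qed.

Lemma character_add (K : numFieldType) (V : lmodType K) (mul : V -> V -> V)
    (theta : V -> K) :
  character mul theta -> {morph theta : x y / x + y}.
Proof. by case=> thetaL _ _ x y; have := thetaL 1 x y; rewrite scale1r mul1r. Qed.

Section MultiplierAdd.
Variables (V : zmodType) (mul : V -> V -> V) (T : V -> V).
Hypotheses (mulDl : forall z, {morph mul^~ z : x y / x + y})
           (mulDr : forall z, {morph mul z : x y / x + y})
           (TD : {morph T : x y / x + y}).

Lemma multiplier_addl x1 x2 y :
  mul x1 (T y) = mul (T x1) y -> mul x2 (T y) = mul (T x2) y ->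
  mul (x1 + x2) (T y) = mul (T (x1 + x2)) y.
Proof. by move=> e1 e2; rewrite TD !mulDl e1 e2. Qed.

Lemma multiplier_addr x y1 y2 :
  mul x (T y1) = mul (T x) y1 -> mul x (T y2) = mul (T x) y2 ->
  mul x (T (y1 + y2)) = mul (T x) (y1 + y2).
Proof. by move=> e1 e2; rewrite TD !mulDr e1 e2. Qed.

End MultiplierAdd.

Section LauProduct.
Variables (K : numFieldType) (A U : lmodType K).
Variables (mulA : A -> A -> A) (mulU : U -> U -> U) (theta : A -> K).
Hypotheses (mulADl : forall z, {morph mulA^~ z : x y / x + y})
           (mulADr : forall z, {morph mulA z : x y / x + y})
           (mulUDl : forall z, {morph mulU^~ z : x y / x + y})
           (mulUDr : forall z, {morph mulU z : x y / x + y})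
           (thetaD : {morph theta : x y / x + y}).

Local Notation lau := (lau_mul mulA mulU theta).

Let mulA0l z : mulA 0 z = 0. Proof. exact: morph_add0 (mulADl z). Qed.
Let mulA0r z : mulA z 0 = 0. Proof. exact: morph_add0 (mulADr z). Qed.
Let mulU0l z : mulU 0 z = 0. Proof. exact: morph_add0 (mulUDl z). Qed.
Let mulU0r z : mulU z 0 = 0. Proof. exact: morph_add0 (mulUDr z). Qed.
Let theta0 : theta 0 = 0. Proof. exact: morph_add0 thetaD. Qed.

Lemma lau_mulDl z : {morph lau^~ z : x y / x + y}.
Proof.
move=> [a u] [a' u']; rewrite /lau_mul /= mulADl thetaD mulUDl scalerDl scalerDr.
congr pair; rewrite /= [RHS]addrACA; congr (_ + _); exact: addrACA.
Qed.

Lemma lau_mulDr z : {morph lau z : x y / x + y}.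
Proof.
move=> [a u] [a' u']; rewrite /lau_mul /= mulADr thetaD mulUDr scalerDl scalerDr.
congr pair; rewrite /= [RHS]addrACA; congr (_ + _); exact: addrACA.
Qed.

Lemma lau_mul_pairl0 a a' u' : lau (a, 0) (a', u') = (mulA a a', theta a *: u').
Proof. by rewrite /lau_mul /= scaler0 mulU0l !addr0. Qed.

Lemma lau_mul_pairr0 a u a' : lau (a, u) (a', 0) = (mulA a a', theta a' *: u).
Proof. by rewrite /lau_mul /= scaler0 mulU0r add0r addr0. Qed.

Lemma lau_mul_pair0l u a' u' :
  lau (0, u) (a', u') = (0, theta a' *: u + mulU u u').
Proof. by rewrite /lau_mul /= mulA0l theta0 scale0r add0r. Qed.

Lemma lau_mul_pair0r a u u' :
  lau (a, u) (0, u') = (0, theta a *: u' + mulU u u').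
Proof. by rewrite /lau_mul /= mulA0r theta0 scale0r addr0. Qed.

Lemma lau_multiplierP (T : A * U -> A * U) :
  {morph T : x y / x + y} ->
  multiplier lau T <->
  (forall a a' u u',
    [/\ lau (a, 0) (T (a', 0)) = lau (T (a, 0)) (a', 0),
        lau (a, 0) (T (0, u')) = lau (T (a, 0)) (0, u'),
        lau (0, u) (T (a', 0)) = lau (T (0, u)) (a', 0)
      & lau (0, u) (T (0, u')) = lau (T (0, u)) (0, u')]).
Proof.
move=> TD; split=> [TM a a' u u' | Tgen [a u] [a' u']]; first by split; apply: TM.
have [e1 e2 e3 e4] := Tgen a a' u u'.
rewrite (pair_split a u) (pair_split a' u').
by apply: (@multiplier_addl _ lau _ lau_mulDl TD);
  apply: (@multiplier_addr _ lau _ lau_mulDr TD).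
Qed.

Variables (R1 : A -> A) (R2 : A -> U) (S1 : U -> A) (S2 : U -> U).
Hypotheses (R1D : {morph R1 : x y / x + y}) (R2D : {morph R2 : x y / x + y})
           (S1D : {morph S1 : x y / x + y}) (S2D : {morph S2 : x y / x + y}).
Variable T : A * U -> A * U.
Hypothesis T_split : forall a u, T (a, u) = (R1 a + S1 u, R2 a + S2 u).

Let T_pairl a : T (a, 0) = (R1 a, R2 a).
Proof. by rewrite T_split (morph_add0 S1D) (morph_add0 S2D) !addr0. Qed.

Let T_pairr u : T (0, u) = (S1 u, S2 u).
Proof. by rewrite T_split (morph_add0 R1D) (morph_add0 R2D) !add0r. Qed.

Let TD : {morph T : x y / x + y}.
Proof.
move=> [a u] [a' u']; rewrite !T_split R1D R2D S1D S2D.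
by congr pair; rewrite /= addrACA.
Qed.

Lemma lau_commute_AA a a' :
  lau (a, 0) (T (a', 0)) = lau (T (a, 0)) (a', 0) <->
  mulA a (R1 a') = mulA (R1 a) a' /\ theta a *: R2 a' = theta a' *: R2 a.
Proof. by rewrite !T_pairl lau_mul_pairl0 lau_mul_pairr0; apply: pair_equal_spec. Qed.

Lemma lau_commute_AU a u :
  lau (a, 0) (T (0, u)) = lau (T (a, 0)) (0, u) <->
  mulA a (S1 u) = 0 /\ theta a *: S2 u = theta (R1 a) *: u + mulU (R2 a) u.
Proof.
by rewrite T_pairl T_pairr lau_mul_pairl0 lau_mul_pair0r; apply: pair_equal_spec.
Qed.

Lemma lau_commute_UA u a :
  lau (0, u) (T (a, 0)) = lau (T (0, u)) (a, 0) <->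
  0 = mulA (S1 u) a /\ theta (R1 a) *: u + mulU u (R2 a) = theta a *: S2 u.
Proof.
by rewrite T_pairl T_pairr lau_mul_pair0l lau_mul_pairr0; apply: pair_equal_spec.
Qed.

Lemma lau_commute_UU u u' :
  lau (0, u) (T (0, u')) = lau (T (0, u)) (0, u') <->
  theta (S1 u') *: u + mulU u (S2 u') = theta (S1 u) *: u' + mulU (S2 u) u'.
Proof.
rewrite !T_pairr lau_mul_pair0l lau_mul_pair0r.
by split=> [/pair_equal_spec[] | ->].
Qed.

Lemma lau_multiplier_split :
  multiplier lau T <->
  [/\ multiplier mulA R1,
      (forall a u, mulA a (S1 u) = 0 /\ mulA (S1 u) a = 0),
      (forall a a', theta a *: R2 a' = theta a' *: R2 a),
      (forall a u, theta a *: S2 u = theta (R1 a) *: u + mulU (R2 a) u /\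
                   theta (R1 a) *: u + mulU (R2 a) u
                     = theta (R1 a) *: u + mulU u (R2 a)) &
      (forall u u', theta (S1 u) *: u' + mulU (S2 u) u'
                    = theta (S1 u') *: u + mulU u (S2 u'))].
Proof.
rewrite (lau_multiplierP TD).
split=> [Tgen | [R1M S1ann R2sym S2R S2S] a a' u u'].
  split=> [a a' | a u | a a' | a u | u u'].
  - by have [/lau_commute_AA[]] := Tgen a a' 0 0.
  - by have [_ /lau_commute_AU[-> _] /lau_commute_UA[<- _] _] := Tgen a a u u.
  - by have [/lau_commute_AA[]] := Tgen a a' 0 0.
  - have [_ /lau_commute_AU[_ e2] /lau_commute_UA[_ e3] _] := Tgen a a u u.
    by rewrite -e2 e3.
  - by have [_ _ _ /lau_commute_UU->] := Tgen 0 0 u u'.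
split.
- by apply/lau_commute_AA; split; [apply: R1M | apply: R2sym].
- by apply/lau_commute_AU; split; [apply: (S1ann a u').1 | apply: (S2R a u').1].
- apply/lau_commute_UA; split; first by rewrite (S1ann a' u).2.
  by rewrite (S2R a' u).1 (S2R a' u).2.
- by apply/lau_commute_UU; rewrite S2S.
Qed.

End LauProduct.

Theorem theorem3p1 (K : numFieldType)
  (A U : completeNormedModType K) (mulA : A -> A -> A) (mulU : U -> U -> U)
  (theta : A -> K)
  (hA : banach_algebra mulA) (hU : banach_algebra mulU)
  (htheta : character mulA theta)
  (T : A * U -> A * U) (hT : is_linear T) :
  multiplier (lau_mul mulA mulU theta) T <->
  exists (R1 : A -> A) (R2 : A -> U) (S1 : U -> A) (S2 : U -> U),
    [/\ is_linear R1, is_linear R2, is_linear S1 & is_linear S2] /\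
    (forall a u, T (a, u) = (R1 a + S1 u, R2 a + S2 u)) /\
    [/\ multiplier mulA R1,
        (forall a u, mulA a (S1 u) = 0 /\ mulA (S1 u) a = 0),
        (forall a a', theta a *: R2 a' = theta a' *: R2 a),
        (forall a u, theta a *: S2 u = theta (R1 a) *: u + mulU (R2 a) u /\
                     theta (R1 a) *: u + mulU (R2 a) u
                       = theta (R1 a) *: u + mulU u (R2 a)) &
        (forall u u', theta (S1 u) *: u' + mulU (S2 u) u'
                      = theta (S1 u') *: u + mulU u (S2 u'))].
Proof.
have lau_split := lau_multiplier_split (banach_algebra_addl hA)
  (banach_algebra_addr hA) (banach_algebra_addl hU) (banach_algebra_addr hU)
  (character_add htheta).
split=> [TM | [R1 [R2 [S1 [S2 [[R1L R2L S1L S2L] [T_split conds]]]]]]].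
  have [R1 [R2 [S1 [S2 [[R1L R2L S1L S2L] T_split]]]]] := is_linear_blocks hT.
  exists R1, R2, S1, S2; do 2!split=> //.
  exact: (lau_split _ _ _ _ (is_linear_add R1L) (is_linear_add R2L)
    (is_linear_add S1L) (is_linear_add S2L) _ T_split).1 TM.
exact: (lau_split _ _ _ _ (is_linear_add R1L) (is_linear_add R2L)
  (is_linear_add S1L) (is_linear_add S2L) _ T_split).2 conds.
Qed.
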